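(* Let $(V,\{\nu_n\})$ be an $L^\infty$-MOS and $(W,\{M_n(W)_+\},e)$ an abstract operator system, regarded as an $L^\infty$-MOS with order gauges $\omega_n(B)=\inf\{t>0: B\le tI_n\otimes e\}$. Suppose $\phi:V\to W$ is completely gauge-contractive. Then the unital extension $\tilde\phi:V_1\to W$, $\tilde\phi(x,\lambda)=\phi(x)+\lambda e$, is completely positive, where $V_1$ carries the cones $M_n(V_1)_+=\{(A,X):u_n(-A,-X)=0\}$.
   Context: An $L^\infty$-MOS is a complex $*$-vector space $V$ ($M_n(V)$ with $(x_{ij})^*=(x_{ji}^* )$, self-adjoint part $M_n(V)_{sa}$) with proper gauges $\nu_n:M_n(V)_{sa}\to[0,\infty)$ (subadditive, positively homogeneous, $\nu_n(A)=\nu_n(-A)=0\Rightarrow A=0$) such that $\nu_k(X^*AX)\le\|X\|^2\nu_n(A)$ for scalar $X\in M_{n,k}$ and $\nu_{n+k}(A\oplus B)=\max\{\nu_n(A),\nu_k(B)\}$. An abstract operator system is a $*$-vector space with proper cones $M_n(W)_+\subseteq M_n(W)_{sa}$ closed under direct sums and scalar conjugations $B\mapsto XBX^*$, and $e$ such that each $(M_n(W)_{sa},M_n(W)_+,I_n\otimes e)$ is an Archimedean order unit space. A linear map $\phi:(V,\{\nu_n\})\to(W,\{\omega_n\})$ is completely gauge-contractive if $\phi(x^* )=\phi(x)^*$ and $\omega_n(\phi^{(n)}(A))\le\nu_n(A)$ for all $n$ and $A\in M_n(V)_{sa}$. Unitization: $V_1=V\oplus\mathbb{C}$, $M_n(V_1)=M_n(V)\oplus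 M_n$, $(A,X)^*=(A^*,X^* )$, $X_t=tI_n-X$, $Y\gg0$ means positive invertible, $u_n(A,X)=\inf\{t>0:X_t\gg0,\ \nu_n(X_t^{-1/2}AX_t^{-1/2})\le1\}$. Completely positive means each $\tilde\phi^{(n)}$ maps $M_n(V_1)_+$ into $M_n(W)_+$. *)

(* Complex scalars are modelled by an arbitrary
   numClosedFieldType C (e.g. algC). *)
From HB Require Import structures.
From mathcomp Require Import all_boot all_order all_algebra.
Set Implicit Arguments. Unset Strict Implicit. Unset Printing Implicit Defensive.
Import Order.TTheory GRing.Theory Num.Theory.
Local Open Scope ring_scope.

Section Defs.
Variable C : numClosedFieldType.

Definition adjmx m n (X : 'M[C]_(m, n)) : 'M[C]_(n, m) :=
  \matrix_(i, j) (X j i)^*.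

Definition psdmx n (X : 'M[C]_n) : Prop :=
  adjmx X = X /\ forall v : 'cV[C]_n, 0 <= (adjmx v *m X *m v) 0 0.

Definition pdmx n (X : 'M[C]_n) : Prop := psdmx X /\ X \in unitmx.

Definition starspace (V : lmodType C) (star : V -> V) : Prop :=
  (forall x, star (star x) = x) /\
  (forall x y, star (x + y) = star x + star y) /\
  (forall (a : C) x, star (a *: x) = a^* *: star x).

Section Mx.
Variables (V : lmodType C) (star : V -> V).

Definition mxstar m n (A : 'M[V]_(m, n)) : 'M[V]_(n, m) :=
  \matrix_(i, j) star (A j i).

Definition sa n (A : 'M[V]_n) : Prop := mxstar A = A.

(* X^* A X for a scalar matrix X in M_{n,k} *)
Definition cong n k (X : 'M[C]_(n, k)) (A : 'M[V]_n) : 'M[V]_k :=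
  \matrix_(i, j) \sum_(p < n) \sum_(q < n) (((X p i)^* * X q j) *: A p q).

Definition mxscale m n (r : C) (A : 'M[V]_(m, n)) : 'M[V]_(m, n) :=
  map_mx ( *:%R r) A.

(* X (x) e  for a scalar matrix X; in particular I_n (x) e = tens 1%:M e *)
Definition tens m n (X : 'M[C]_(m, n)) (e : V) : 'M[V]_(m, n) :=
  \matrix_(i, j) (X i j *: e).
End Mx.

(* "inf S <= c" for a set S of reals (S is always a subset of (0,oo) here) *)
Definition inf_le (S : C -> Prop) (c : C) : Prop :=
  forall eps : C, 0 < eps -> exists t, S t /\ t < c + eps.

Definition Linf_MOS (V : lmodType C) (star : V -> V)
    (nu : forall n, 'M[V]_n -> C) : Prop :=
  starspace star /\
  (forall n (A : 'M[V]_n), sa star A -> 0 <= nu n A) /\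
  (forall n (A B : 'M[V]_n), sa star A -> sa star B ->
      nu n (A + B) <= nu n A + nu n B) /\
  (forall n (r : C) (A : 'M[V]_n), 0 <= r -> sa star A ->
      nu n (mxscale r A) = r * nu n A) /\
  (forall n (A : 'M[V]_n), sa star A -> nu n A = 0 -> nu n (- A) = 0 -> A = 0) /\
  (* nu_k(X^* A X) <= ||X||^2 nu_n(A); ||X||^2 = min{c >= 0 : X^* X <= c I} *)
  (forall n k (X : 'M[C]_(n, k)) (A : 'M[V]_n) (c : C),
      sa star A -> 0 <= c -> psdmx (c%:M - adjmx X *m X) ->
      nu k (cong X A) <= c * nu n A) /\
  (forall n k (A : 'M[V]_n) (B : 'M[V]_k), sa star A -> sa star B ->
      nu (n + k)%N (block_mx A 0 0 B) = Num.max (nu n A) (nu k B)).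

Definition opsys (W : lmodType C) (star : W -> W)
    (cone : forall n, 'M[W]_n -> Prop) (e : W) : Prop :=
  starspace star /\
  (forall n (B : 'M[W]_n), cone n B -> sa star B) /\
  (forall n (B1 B2 : 'M[W]_n), cone n B1 -> cone n B2 -> cone n (B1 + B2)) /\
  (forall n (r : C) (B : 'M[W]_n), 0 <= r -> cone n B -> cone n (mxscale r B)) /\
  (forall n (B : 'M[W]_n), cone n B -> cone n (- B) -> B = 0) /\
  (forall n k (A : 'M[W]_n) (B : 'M[W]_k), cone n A -> cone k B ->
      cone (n + k)%N (block_mx A 0 0 B)) /\
  (forall n k (X : 'M[C]_(k, n)) (B : 'M[W]_n), cone n B ->
      cone k (cong (adjmx X) B)) /\
  star e = e /\
  (forall n (B : 'M[W]_n), sa star B ->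
      exists t : C, 0 < t /\ cone n (tens (t%:M) e - B)) /\
  (forall n (B : 'M[W]_n), sa star B ->
      (forall eps : C, 0 < eps -> cone n (B + tens (eps%:M) e)) -> cone n B).

(* the set whose infimum is the order gauge omega_n(B) *)
Definition omega_set (W : lmodType C) (cone : forall n, 'M[W]_n -> Prop)
    (e : W) n (B : 'M[W]_n) (t : C) : Prop :=
  0 < t /\ cone n (tens (t%:M) e - B).

Definition cgc (V W : lmodType C) (starV : V -> V) (starW : W -> W)
    (nu : forall n, 'M[V]_n -> C) (cone : forall n, 'M[W]_n -> Prop) (e : W)
    (phi : {linear V -> W}) : Prop :=
  (forall x, phi (starV x) = starW (phi x)) /\
  (forall n (A : 'M[V]_n), sa starV A ->
      inf_le (omega_set cone e (map_mx phi A)) (nu n A)).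

(* the set whose infimum is u_n(A, X); X_t^{-1/2} is the positive square
   root S of X_t^{-1}, X_t = t I - X *)
Definition u_set (V : lmodType C) (nu : forall n, 'M[V]_n -> C)
    n (A : 'M[V]_n) (X : 'M[C]_n) (t : C) : Prop :=
  0 < t /\ pdmx (t%:M - X) /\
  exists S : 'M[C]_n, psdmx S /\ S *m S = invmx (t%:M - X) /\
     nu n (cong S A) <= 1.

(* M_n(V_1)_+ = {(A,X) self-adjoint : u_n(-A,-X) = 0} *)
Definition unit_cone (V : lmodType C) (star : V -> V)
    (nu : forall n, 'M[V]_n -> C) n (A : 'M[V]_n) (X : 'M[C]_n) : Prop :=
  sa star A /\ adjmx X = X /\ inf_le (u_set nu (- A) (- X)) 0.

Definition unital_ext (V W : lmodType C) (phi : {linear V -> W}) (e : W)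
    n (A : 'M[V]_n) (X : 'M[C]_n) : 'M[W]_n :=
  map_mx phi A + tens X e.

End Defs.

(* Fix eps > 0 and pick t < eps/2 with S = (t I + X)^(-1/2) and
   nu(S (-A) S) <= 1.  Gauge contractivity gives s I(x)e + S phi(A) S >= 0
   with s <= 1 + d, and conjugating by S^-1 turns this into
   s (t I + X)(x)e + phi(A) >= 0.  Dividing by s costs at most (s - 1) c units
   of e, where c I(x)e + phi(A) >= 0; with d = eps/(2c) this leaves
   phi(A) + X(x)e + eps I(x)e >= 0, and the Archimedean property concludes. *)

From HB Require Import structures.
From mathcomp Require Import all_boot all_order all_algebra.
From mathcomp Require Import ring.
Import Order.TTheory GRing.Theory Num.Theory.
Local Open Scope ring_scope.

Set Implicit Arguments. Unset Strict Implicit. Unset Printing Implicit Defensive.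

Section ScalarMatrices.
Variable C : numClosedFieldType.

Lemma adjmxE m n (X : 'M[C]_(m, n)) : adjmx X = (X ^t*)%sesqui.
Proof. by apply/matrixP=> i j; rewrite !mxE. Qed.

Lemma adjmxK m n (X : 'M[C]_(m, n)) : adjmx (adjmx X) = X.
Proof. by rewrite !adjmxE trmxCK. Qed.

Lemma adjmx_invmx n (S : 'M[C]_n) : adjmx (invmx S) = invmx (adjmx S).
Proof. by rewrite !adjmxE trmx_inv map_invmx. Qed.

Lemma unitmx_sqrt_invmx n (S M : 'M[C]_n) :
  M \in unitmx -> S *m S = invmx M -> S \in unitmx.
Proof. by move=> + SS; rewrite -unitmx_inv -SS unitmx_mul => /andP[]. Qed.

Lemma adjmx_inv_sqrt_invmx n (S M : 'M[C]_n) :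
  adjmx S = S -> M \in unitmx -> S *m S = invmx M ->
  adjmx (invmx S) *m invmx S = M.
Proof.
move=> adjS Mu SS; have Su := unitmx_sqrt_invmx Mu SS.
have SST : (S *m S) *m (invmx S *m invmx S) = 1%:M.
  by rewrite mulmxA -(mulmxA S) mulmxV // mulmx1 mulmxV.
by rewrite adjmx_invmx adjS -[LHS](mulKVmx Mu) -SS SST mulmx1.
Qed.

End ScalarMatrices.

Section MatricesOverModules.
Variable C : numClosedFieldType.
Implicit Types V W : lmodType C.

Lemma mxscaleDl V m n r s (A : 'M[V]_(m, n)) :
  mxscale (r + s) A = mxscale r A + mxscale s A.
Proof. by apply/matrixP=> i j; rewrite !mxE scalerDl. Qed.

Lemma mxscaleDr V m n r (A B : 'M[V]_(m, n)) :
  mxscale r (A + B) = mxscale r A + mxscale r B.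
Proof. by apply/matrixP=> i j; rewrite !mxE scalerDr. Qed.

Lemma mxscaleA V m n r s (A : 'M[V]_(m, n)) :
  mxscale r (mxscale s A) = mxscale (r * s) A.
Proof. by apply/matrixP=> i j; rewrite !mxE scalerA. Qed.

Lemma mxscale1 V m n (A : 'M[V]_(m, n)) : mxscale 1 A = A.
Proof. by apply/matrixP=> i j; rewrite !mxE scale1r. Qed.

Lemma mxscaleN1 V m n (A : 'M[V]_(m, n)) : mxscale (-1) A = - A.
Proof. by apply/matrixP=> i j; rewrite !mxE scaleN1r. Qed.

Lemma tensD V m n (P Q : 'M[C]_(m, n)) (e : V) :
  tens (P + Q) e = tens P e + tens Q e.
Proof. by apply/matrixP=> i j; rewrite !mxE scalerDl. Qed.

Lemma tens_scalar V n r (e : V) :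
  tens (r%:M : 'M[C]_n) e = mxscale r (tens 1%:M e).
Proof. by apply/matrixP=> i j; rewrite !mxE scalerA mulrnAr mulr1. Qed.

Lemma congD V n k (X : 'M[C]_(n, k)) (A B : 'M[V]_n) :
  cong X (A + B) = cong X A + cong X B.
Proof.
apply/matrixP=> i j; rewrite !mxE -big_split; apply: eq_bigr => p _.
by rewrite -big_split; apply: eq_bigr => q _; rewrite !mxE scalerDr.
Qed.

Lemma congZ V n k (X : 'M[C]_(n, k)) r (A : 'M[V]_n) :
  cong X (mxscale r A) = mxscale r (cong X A).
Proof.
apply/matrixP=> i j; rewrite !mxE scaler_sumr; apply: eq_bigr => p _.
by rewrite scaler_sumr; apply: eq_bigr => q _; rewrite !mxE !scalerA mulrC.
Qed.

Lemma congN V n k (X : 'M[C]_(n, k)) (A : 'M[V]_n) : cong X (- A) = - cong X A.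
Proof. by rewrite -mxscaleN1 congZ mxscaleN1. Qed.

Lemma cong1 V n (A : 'M[V]_n) : cong 1%:M A = A.
Proof.
apply/matrixP=> i j; rewrite !mxE (bigD1 i) //= [X in _ + X]big1 => [|p ip].
  rewrite addr0 (bigD1 j) //= [X in _ + X]big1 => [|q jq].
    by rewrite !mxE !eqxx rmorph1 mulr1 scale1r addr0.
  by rewrite !mxE (negbTE jq) mulr0 scale0r.
by apply: big1 => q _; rewrite !mxE (negbTE ip) rmorph0 mul0r scale0r.
Qed.

Lemma cong_tens V n k (X : 'M[C]_(n, k)) (P : 'M[C]_n) (e : V) :
  cong X (tens P e) = tens (adjmx X *m P *m X) e.
Proof.
apply/matrixP=> i j; rewrite !mxE scaler_suml [LHS]exchange_big.
apply: eq_bigr => q _; rewrite !mxE mulr_suml scaler_suml.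
by apply: eq_bigr => p _; rewrite !mxE scalerA; congr (_ *: _); ring.
Qed.

Lemma cong_comp V n k l (S : 'M[C]_(n, k)) (T : 'M[C]_(k, l)) (A : 'M[V]_n) :
  cong T (cong S A) = cong (S *m T) A.
Proof.
apply/matrixP=> i j; rewrite !mxE.
pose F a b p q := (((T a i)^* * T b j) * ((S p a)^* * S q b)) *: A p q.
transitivity (\sum_a \sum_b \sum_p \sum_q F a b p q).
  apply: eq_bigr => a _; apply: eq_bigr => b _; rewrite mxE scaler_sumr.
  apply: eq_bigr => p _; rewrite scaler_sumr.
  by apply: eq_bigr => q _; rewrite scalerA.
transitivity (\sum_p \sum_q \sum_a \sum_b F a b p q).
  under eq_bigr => a _ do rewrite exchange_big.
  under eq_bigr => a _ do under eq_bigr => p _ do rewrite exchange_big.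
  by rewrite exchange_big; under eq_bigr => p _ do rewrite exchange_big.
apply: eq_bigr => p _; apply: eq_bigr => q _.
rewrite !mxE rmorph_sum mulr_suml scaler_suml; apply: eq_bigr => a _.
rewrite mulr_sumr scaler_suml; apply: eq_bigr => b _.
by rewrite /F rmorphM; congr (_ *: _); ring.
Qed.

Lemma map_cong V W (f : {linear V -> W}) n k (X : 'M[C]_(n, k)) (A : 'M[V]_n) :
  map_mx f (cong X A) = cong X (map_mx f A).
Proof.
apply/matrixP=> i j; rewrite !mxE linear_sum; apply: eq_bigr => p _.
by rewrite linear_sum; apply: eq_bigr => q _; rewrite linearZ !mxE.
Qed.

End MatricesOverModules.

Section SelfAdjoint.
Variable C : numClosedFieldType.
Variables (V : lmodType C) (star : V -> V).
Hypothesis star_space : starspace star.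

Lemma starD x y : star (x + y) = star x + star y.
Proof. by case: star_space => _ []. Qed.

Lemma starZ (a : C) x : star (a *: x) = a^* *: star x.
Proof. by case: star_space => _ []. Qed.

Lemma star0 : star 0 = 0.
Proof. by have := starZ 0 0; rewrite conjC0 !scale0r. Qed.

Lemma starN x : star (- x) = - star x.
Proof. by rewrite -scaleN1r starZ rmorphN rmorph1 scaleN1r. Qed.

Lemma star_sum I (r : seq I) (P : pred I) (F : I -> V) :
  star (\sum_(i <- r | P i) F i) = \sum_(i <- r | P i) star (F i).
Proof. exact: (big_morph star starD star0). Qed.

Lemma sa_entry n (A : 'M[V]_n) i j : sa star A -> star (A i j) = A j i.
Proof. by move=> saA; rewrite -{2}saA !mxE. Qed.

Lemma sa0 n : sa star (0 : 'M[V]_n).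
Proof. by apply/matrixP=> i j; rewrite !mxE star0. Qed.

Lemma saD n (A B : 'M[V]_n) : sa star A -> sa star B -> sa star (A + B).
Proof.
by move=> saA saB; apply/matrixP=> i j; rewrite !mxE starD !sa_entry.
Qed.

Lemma saN n (A : 'M[V]_n) : sa star A -> sa star (- A).
Proof. by move=> saA; apply/matrixP=> i j; rewrite !mxE starN sa_entry. Qed.

Lemma sa_tens n (X : 'M[C]_n) (e : V) :
  adjmx X = X -> star e = e -> sa star (tens X e).
Proof.
move=> adjX se; apply/matrixP=> i j; rewrite !mxE starZ se.
by rewrite -{2}adjX !mxE.
Qed.

Lemma sa_cong n k (X : 'M[C]_(n, k)) (A : 'M[V]_n) :
  sa star A -> sa star (cong X A).
Proof.
move=> saA; apply/matrixP=> i j; rewrite !mxE star_sum exchange_big.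
apply: eq_bigr => q _; rewrite star_sum; apply: eq_bigr => p _.
rewrite starZ sa_entry // rmorphM mulrC; congr (_ * _ *: _); exact: conjCK.
Qed.

Lemma sa_map (W : lmodType C) (starW : W -> W) (f : V -> W) n (A : 'M[V]_n) :
  (forall x, f (star x) = starW (f x)) -> sa star A -> sa starW (map_mx f A).
Proof.
by move=> fstar saA; apply/matrixP=> i j; rewrite !mxE -fstar sa_entry.
Qed.

End SelfAdjoint.

Section OperatorSystem.
Variable C : numClosedFieldType.
Variables (W : lmodType C) (star : W -> W) (cone : forall n, 'M[W]_n -> Prop).
Arguments cone : clear implicits.
Variable e : W.
Hypothesis opsysW : opsys star cone e.

Local Notation E := (tens 1%:M e).

Lemma opsys_starspace : starspace star.
Proof. by case: opsysW. Qed.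

Lemma opsys_star_unit : star e = e.
Proof. by case: opsysW => _ [_ [_ [_ [_ [_ [_ []]]]]]]. Qed.

Lemma coneD n (B1 B2 : 'M[W]_n) : cone n B1 -> cone n B2 -> cone n (B1 + B2).
Proof. by case: opsysW => _ [_ [addP _]]; apply: addP. Qed.

Lemma coneZ n r (B : 'M[W]_n) : 0 <= r -> cone n B -> cone n (mxscale r B).
Proof. by case: opsysW => _ [_ [_ [scaleP _]]]; apply: scaleP. Qed.

Lemma cone_cong n k (X : 'M[C]_(n, k)) (B : 'M[W]_n) :
  cone n B -> cone k (cong X B).
Proof.
case: opsysW => _ [_ [_ [_ [_ [_ [congP _]]]]]].
by rewrite -[X]adjmxK; apply: congP.
Qed.

Lemma cone_unscale n s (B : 'M[W]_n) :
  0 < s -> cone n (mxscale s B) -> cone n B.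
Proof.
move=> s_gt0 coneB; rewrite -[B]mxscale1 -(mulVf (lt0r_neq0 s_gt0)) -mxscaleA.
by apply: (coneZ _ coneB); rewrite invr_ge0 ltW.
Qed.

Lemma cone_order_unit n (B : 'M[W]_n) :
  sa star B -> exists2 c, 0 < c & cone n (mxscale c E + B).
Proof.
case: opsysW => _ [_ [_ [_ [_ [_ [_ [_ [order_unit _]]]]]]]] saB.
have [c [c_gt0 coneB]] := order_unit n _ (saN opsys_starspace saB).
by exists c; rewrite // -tens_scalar -[B]opprK.
Qed.

Lemma cone_unit n : cone n E.
Proof.
have [c c_gt0] := cone_order_unit (sa0 opsys_starspace n).
by rewrite addr0; apply: cone_unscale.
Qed.

Lemma cone_unit_mono n a b (B : 'M[W]_n) :
  a <= b -> cone n (mxscale a E + B) -> cone n (mxscale b E + B).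
Proof.
move=> le_ab coneB; rewrite -(subrK a b) mxscaleDl -addrA.
by apply: coneD coneB; apply: (coneZ _ (cone_unit n)); rewrite subr_ge0.
Qed.

Lemma cone_archimedean n (B : 'M[W]_n) : sa star B ->
  (forall eps, 0 < eps -> exists2 a, a <= eps & cone n (mxscale a E + B)) ->
  cone n B.
Proof.
case: opsysW => _ [_ [_ [_ [_ [_ [_ [_ [_ archimedean]]]]]]]] saB approxB.
apply: archimedean => // eps /approxB[a le_a_eps coneB].
by rewrite addrC tens_scalar; apply: cone_unit_mono le_a_eps coneB.
Qed.

Lemma cone_cong_rinv n (S T : 'M[C]_n) s (B : 'M[W]_n) : S *m T = 1%:M ->
  cone n (mxscale s E + cong S B) ->
  cone n (mxscale s (tens (adjmx T *m T) e) + B).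
Proof.
move=> ST1 /(cone_cong T).
by rewrite congD congZ cong_tens cong_comp ST1 cong1 mulmx1; apply.
Qed.

(* s (a E + N + B) = (s N + B) + (s - 1) (c E + B) + (s a - (s - 1) c) E *)
Lemma cone_divide_scale n s c a (N B : 'M[W]_n) :
  1 <= s -> (s - 1) * c <= s * a ->
  cone n (mxscale c E + B) -> cone n (mxscale s N + B) ->
  cone n (mxscale a E + (N + B)).
Proof.
move=> s_ge1 le_sa coneB coneN; have s_gt0 : 0 < s := lt_le_trans ltr01 s_ge1.
apply: (@cone_unscale _ s) => //.
rewrite mxscaleDr mxscaleA; apply: cone_unit_mono le_sa _.
have -> : mxscale ((s - 1) * c) E + mxscale s (N + B) =
          mxscale s N + B + mxscale (s - 1) (mxscale c E + B).
  rewrite !mxscaleDr mxscaleA -{2}[B]mxscale1 -[in mxscale s B](subrKC 1 s).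
  by rewrite mxscaleDl addrCA -addrA; congr (_ + _); apply: addrCA.
by apply: coneD coneN (coneZ _ coneB); rewrite subr_ge0.
Qed.

End OperatorSystem.

Theorem lemma3p12 (C : numClosedFieldType) (V W : lmodType C)
    (starV : V -> V) (nu : forall n, 'M[V]_n -> C)
    (starW : W -> W) (cone : forall n, 'M[W]_n -> Prop) (e : W)
    (phi : {linear V -> W}) :
  Linf_MOS starV nu ->
  opsys starW cone e ->
  cgc starV starW nu cone e phi ->
  forall n (A : 'M[V]_n) (X : 'M[C]_n),
    unit_cone starV nu A X -> cone n (unital_ext phi e A X).
Proof.
move=> [starV_space _] opsysW [phi_star phi_gauge] n A X [saA [adjX u_small]].
have starW_space := opsys_starspace opsysW.
have saPA : sa starW (map_mx phi A) := sa_map phi_star saA.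
have [c c_gt0 coneA] := cone_order_unit opsysW saPA.
rewrite /unital_ext addrC; apply: (cone_archimedean opsysW).
  have saX := sa_tens starW_space adjX (opsys_star_unit opsysW).
  exact: (saD starW_space saX saPA).
move=> eps eps_gt0; have eps2_gt0 : 0 < eps / 2 by rewrite divr_gt0 ?ltr0n.
pose d := eps / 2 / c; have d_gt0 : 0 < d by rewrite divr_gt0.
have [t [[_ [[_ M_unit] [S [[adjS _] [SS nuS]]]]] t_lt]] := u_small _ eps2_gt0.
have saSA := sa_cong starV_space S (saN starV_space saA).
have [s [[_ coneS] s_lt]] := phi_gauge n _ saSA d d_gt0.
rewrite map_cong map_mxN congN opprK tens_scalar in coneS.
have le_s : s <= 1 + d by rewrite ltW // (lt_le_trans s_lt) // lerD2r.
have Su := unitmx_sqrt_invmx M_unit SS.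
have := cone_cong_rinv opsysW (mulmxV Su) (cone_unit_mono opsysW le_s coneS).
rewrite (adjmx_inv_sqrt_invmx adjS M_unit SS) opprK tensD tens_scalar => coneM.
have le_dc : (1 + d - 1) * c <= (1 + d) * (eps / 2).
  by rewrite addrAC subrr add0r divfK ?gt_eqF // ler_peMl ?lerDl ?ltW.
have s_ge1 : 1 <= 1 + d by rewrite lerDl ltW.
have coneB := cone_divide_scale opsysW s_ge1 le_dc coneA coneM.
exists (eps / 2 + t); last by rewrite mxscaleDl -!addrA in coneB *.
by rewrite add0r in t_lt; rewrite {2}[eps]splitr lerD2l ltW.
Qed.
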